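(* For every traditional polynomial scheme, there exists a constant $K>0$ and an FTP code such that the communication rate of the FTP code is higher than that of the traditional polynomial scheme, whenever the matrix dimensions $a$, $b$, and $c$ are such that $b \left( \frac{1}{a}+\frac{1}{c} \right) < K$.
   Context: Setting (secure distributed matrix multiplication): a user has matrices $A \in \mathbb{F}_q^{a \times b}$ and $B \in \mathbb{F}_q^{b \times c}$ and wishes to compute $AB$ with the help of $N$ honest-but-curious servers, such that no set of $T$ colluding servers learns any information about $A$ or $B$ ($T$-security). The matrices are partitioned by the inner product partitioning $A = \begin{bmatrix}A_1 & \cdots & A_L\end{bmatrix}$, $B^{\intercal} = \begin{bmatrix}B_1^{\intercal} & \cdots & B_L^{\intercal}\end{bmatrix}$ so that $AB = A_1B_1+\cdots+A_LB_L$ ($L$ is the partitioning parameter). A traditional polynomial scheme uses a polynomial $h(x)=f(x)g(x)$ whose coefficients encode the products $A_kB_\ell$; the user uploads evaluations $f(\alpha_i), g(\alpha_i)$ to Server $i$, each server computes $h(\alpha_i)$ and sends this full evaluation back, with the construction being $T$-secure and allowing the user to reconstruct $AB$ from all $N$ evaluations; its recovery threshold (number of servers) $N'$ satisfies $N'>L$. An FTP (field trace polynomial) code with partitioning parameter $L$ and security parameter $T$ works over $\mathbb{F}_q$ with $q=q_0^{p_1p_2\cdots p_L}$ for a prime power $q_0$ and primes $p_1<\cdots<p_L$; with $N_i = p_i + 2L + 2T - 2$ it uses $N_L$ servers, and instead of full evaluations the servers send field traces of (scaled) evaluations of $h$ to subfields; it is $T$-secure, decodable, and has total communication rate $\left(\frac{N_Lb}{L}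 \left( \frac{1}{a}+\frac{1}{c} \right)+\sum_{i=1}^L\frac{N_i}{p_i}\right)^{-1}$. The total communication rate of a scheme is the number of symbols of $AB$ divided by the total (upload plus download) communication cost. *)

From Stdlib Require Import Reals Lra Lia ZArith Znumtheory List Sorted.
Open Scope R_scope.

Definition nat_prime (p : nat) : Prop := prime (Z.of_nat p).
Definition prime_power (q : nat) : Prop :=
  exists p k : nat, nat_prime p /\ (1 <= k)%nat /\ q = (p ^ k)%nat.

(** ---------- Traditional polynomial scheme ----------
    Parameters: partitioning parameter L, security parameter T,
    recovery threshold (number of servers) N'.  Server i receives
    f(alpha_i) in F^{a x b/L} and g(alpha_i) in F^{b/L x c} and returns
    the full evaluation h(alpha_i) in F^{a x c}. *)
Record TradScheme := { ts_L : nat; ts_T : nat; ts_N : nat }.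

Definition valid_trad (s : TradScheme) : Prop :=
  (1 <= ts_L s)%nat /\ (1 <= ts_T s)%nat /\ (ts_L s < ts_N s)%nat.

Definition trad_upload (s : TradScheme) (a b c : nat) : R :=
  INR (ts_N s) * (INR a * INR b / INR (ts_L s) + INR b * INR c / INR (ts_L s)).

Definition trad_download (s : TradScheme) (a c : nat) : R :=
  INR (ts_N s) * (INR a * INR c).

(** total communication rate = #symbols of AB / (upload + download) *)
Definition trad_rate (s : TradScheme) (a b c : nat) : R :=
  INR a * INR c / (trad_upload s a b c + trad_download s a c).

(** ---------- FTP code ----------
    Parameters: L, T, prime power q0, primes p_1 < ... < p_L
    (field F_q with q = q0^(p_1 ... p_L)). *)
Record FTPCode := { ftp_L : nat; ftp_T : nat; ftp_q0 : nat; ftp_primes : list nat }.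

Definition valid_ftp (C : FTPCode) : Prop :=
  (1 <= ftp_L C)%nat /\ (1 <= ftp_T C)%nat /\ prime_power (ftp_q0 C) /\
  length (ftp_primes C) = ftp_L C /\
  Forall nat_prime (ftp_primes C) /\
  StronglySorted lt (ftp_primes C).

Definition ftp_Ni (C : FTPCode) (p : nat) : R :=
  INR p + 2 * INR (ftp_L C) + 2 * INR (ftp_T C) - 2.

Definition ftp_pL (C : FTPCode) : nat := nth (ftp_L C - 1) (ftp_primes C) 0%nat.

Definition ftp_rate (C : FTPCode) (a b c : nat) : R :=
  / (ftp_Ni C (ftp_pL C) * INR b / INR (ftp_L C) * (1 / INR a + 1 / INR c)
     + fold_right Rplus 0 (map (fun p => ftp_Ni C p / INR p) (ftp_primes C))).

(* Each FTP term N_i / p_i equals 1 + (2L + 2T - 2) / p_i, so taking all L primes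
   above L (2L + 2T) makes sum_i N_i / p_i < L + 1 <= N'.  Both inverse rates are
   affine in x = b (1/a + 1/c): N' x / L + N' for the traditional scheme and
   N_L x / L + sum_i N_i / p_i for FTP.  The FTP constant term being strictly smaller,
   FTP wins as soon as x < K := (N' - sum_i N_i / p_i) L / N_L. *)

From Stdlib Require Import Reals ZArith Znumtheory Lia Lra List Sorted.
From mathcomp Require ssrbool eqtype ssrnat div prime.
Open Scope R_scope.

Lemma nat_prime_of_prime (p : nat) : is_true (prime.prime p) -> nat_prime p.
Proof.
  intros Hp. destruct (ssrbool.elimT prime.primeP Hp) as [Hgt1 Hdiv].
  apply (ssrbool.elimT ssrnat.leP) in Hgt1.
  apply prime_alt. split; [lia|].
  intros n [Hn1 Hnp] [k Hk].
  assert (Hfactor : p = (Z.to_nat k * Z.to_nat n)%nat).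
  { apply Nat2Z.inj. rewrite Nat2Z.inj_mul, !Z2Nat.id; lia. }
  assert (Hdvd : is_true (div.dvdn (Z.to_nat n) p)).
  { rewrite Hfactor. exact (div.dvdn_mull _ (div.dvdnn _)). }
  destruct (proj1 (Bool.orb_true_iff _ _) (Hdiv _ Hdvd)) as [Heq | Heq];
    apply (ssrbool.elimT eqtype.eqP) in Heq; lia.
Qed.

Lemma exists_sorted_primes_above (n m : nat) :
  exists l, length l = n /\ Forall (fun p => nat_prime p /\ (m < p)%nat) l /\
            StronglySorted lt l.
Proof.
  revert m. induction n as [|n IH]; intros m.
  - exists nil. repeat constructor.
  - destruct (prime.prime_above m) as [p Hmp Hp].
    apply (ssrbool.elimT ssrnat.ltP) in Hmp.
    destruct (IH p) as [l [Hlen [Hl Hsorted]]].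
    exists (p :: l). split; [simpl; lia|]. split.
    + constructor; [split; [apply nat_prime_of_prime|]; assumption|].
      eapply Forall_impl; [|exact Hl]. intros q [Hq Hpq]. split; [exact Hq | lia].
    + constructor; [exact Hsorted|].
      eapply Forall_impl; [|exact Hl]. intros q [_ Hpq]. exact Hpq.
Qed.

Lemma fold_right_Rplus_map_bounds {A : Type} (f : A -> R) (lo hi : R) (l : list A) :
  Forall (fun x => lo <= f x <= hi) l ->
  INR (length l) * lo <= fold_right Rplus 0 (map f l) <= INR (length l) * hi.
Proof.
  induction 1 as [|x l Hx _ IH]; cbn [length map fold_right].
  - simpl. lra.
  - rewrite S_INR. lra.
Qed.

Definition ftp_download (C : FTPCode) : R :=
  fold_right Rplus 0 (map (fun p => ftp_Ni C p / INR p) (ftp_primes C)).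

Definition ftp_excess (C : FTPCode) : R := 2 * INR (ftp_L C) + 2 * INR (ftp_T C) - 2.

Lemma ftp_Ni_div_bounds (C : FTPCode) (m p : nat) :
  (1 <= ftp_L C)%nat -> (m < p)%nat ->
  1 <= ftp_Ni C p / INR p <= 1 + ftp_excess C / INR (S m).
Proof.
  intros HL Hmp.
  assert (Hexcess : 0 <= ftp_excess C).
  { unfold ftp_excess. pose proof (le_INR 1 _ HL). pose proof (pos_INR (ftp_T C)).
    simpl in *. lra. }
  assert (Hm : 0 < INR (S m)) by apply lt_0_INR, Nat.lt_0_succ.
  assert (Hmp' : INR (S m) <= INR p) by (apply le_INR; lia).
  replace (ftp_Ni C p / INR p) with (1 + ftp_excess C / INR p)
    by (unfold ftp_Ni, ftp_excess; field; lra).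
  split.
  - assert (0 <= ftp_excess C / INR p) by (apply Rle_mult_inv_pos; lra). lra.
  - apply Rplus_le_compat_l, Rmult_le_compat_l; [exact Hexcess|].
    apply Rinv_le_contravar; lra.
Qed.

Lemma exists_ftp_code_download_lt (L T N : nat) :
  (1 <= L)%nat -> (1 <= T)%nat -> (L < N)%nat ->
  exists C, valid_ftp C /\ ftp_L C = L /\ ftp_T C = T /\
            0 < ftp_download C < INR N.
Proof.
  intros HL HT HLN.
  set (m := (L * (2 * L + 2 * T))%nat).
  destruct (exists_sorted_primes_above L m) as [l [Hlen [Hl Hsorted]]].
  set (C := {| ftp_L := L; ftp_T := T; ftp_q0 := 2; ftp_primes := l |}).
  exists C. split; [|split; [reflexivity | split; [reflexivity |]]].
  { repeat split; simpl; try assumption.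
    - exists 2%nat, 1%nat. split; [exact prime_2 | split; [lia | reflexivity]].
    - eapply Forall_impl; [|exact Hl]. intros p [Hp _]. exact Hp. }
  assert (Hterms : Forall (fun p => 1 <= ftp_Ni C p / INR p
                                    <= 1 + ftp_excess C / INR (S m)) l).
  { eapply Forall_impl; [|exact Hl]. intros p [_ Hmp].
    exact (ftp_Ni_div_bounds C m p HL Hmp). }
  destruct (fold_right_Rplus_map_bounds _ _ _ _ Hterms) as [Hlo Hhi].
  unfold ftp_download. change (ftp_primes C) with l. rewrite Hlen in Hlo, Hhi.
  assert (HLr : 1 <= INR L) by (apply (le_INR 1); exact HL).
  assert (HTr : 1 <= INR T) by (apply (le_INR 1); exact HT).
  assert (HNr : INR L + 1 <= INR N) by (rewrite <- S_INR; apply le_INR; exact HLN).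
  assert (Hm : INR (S m) = INR L * (2 * INR L + 2 * INR T) + 1).
  { unfold m. rewrite S_INR, mult_INR, plus_INR, !mult_INR. simpl. lra. }
  (* m is chosen so that m + 1 exceeds L times the excess. *)
  assert (Hsmall : INR L * (ftp_excess C / INR (S m)) < 1).
  { rewrite Hm. unfold ftp_excess; simpl.
    apply (Rmult_lt_reg_r (INR L * (2 * INR L + 2 * INR T) + 1)); [nra|].
    field_simplify; nra. }
  split; nra.
Qed.

Lemma ftp_Ni_pos (C : FTPCode) (p : nat) :
  (1 <= ftp_L C)%nat -> (1 <= ftp_T C)%nat -> 0 < ftp_Ni C p.
Proof.
  intros HL HT. unfold ftp_Ni.
  pose proof (le_INR 1 _ HL). pose proof (le_INR 1 _ HT). pose proof (pos_INR p).
  simpl in *. lra.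
Qed.

Lemma dimension_ratio_nonneg (a b c : nat) :
  (0 < a)%nat -> (0 < c)%nat -> 0 <= INR b * (1 / INR a + 1 / INR c).
Proof.
  intros Ha Hc.
  pose proof (lt_0_INR _ Ha). pose proof (lt_0_INR _ Hc).
  assert (0 < 1 / INR a) by (apply Rdiv_lt_0_compat; lra).
  assert (0 < 1 / INR c) by (apply Rdiv_lt_0_compat; lra).
  apply Rmult_le_pos; [apply pos_INR | lra].
Qed.

Lemma ftp_rate_affine (C : FTPCode) (a b c : nat) :
  ftp_rate C a b c =
  / (ftp_Ni C (ftp_pL C) / INR (ftp_L C) * (INR b * (1 / INR a + 1 / INR c))
     + ftp_download C).
Proof. unfold ftp_rate, ftp_download. f_equal. unfold Rdiv. ring. Qed.

Lemma trad_rate_affine (s : TradScheme) (a b c : nat) :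
  (0 < a)%nat -> (0 < c)%nat -> (1 <= ts_L s)%nat -> (1 <= ts_N s)%nat ->
  trad_rate s a b c =
  / (INR (ts_N s) / INR (ts_L s) * (INR b * (1 / INR a + 1 / INR c)) + INR (ts_N s)).
Proof.
  intros Ha Hc HL HN.
  pose proof (lt_0_INR _ Ha). pose proof (lt_0_INR _ Hc).
  pose proof (le_INR 1 _ HL). pose proof (le_INR 1 _ HN). pose proof (pos_INR b).
  simpl in *.
  set (x := INR b * (1 / INR a + 1 / INR c)).
  set (D := INR (ts_N s) / INR (ts_L s) * x + INR (ts_N s)).
  assert (Hcost : trad_upload s a b c + trad_download s a c = INR a * INR c * D).
  { unfold trad_upload, trad_download, D, x. field. lra. }
  assert (HD : 0 < D).
  { assert (0 <= x) by exact (dimension_ratio_nonneg a b c Ha Hc).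
    assert (0 <= INR (ts_N s) / INR (ts_L s) * x).
    { apply Rmult_le_pos; [apply Rle_mult_inv_pos|]; lra. }
    unfold D. lra. }
  unfold trad_rate. rewrite Hcost. field. split; lra.
Qed.

Lemma Rinv_affine_lt (u v D N x : R) :
  0 < u -> 0 <= v -> 0 < D -> 0 <= x -> x < (N - D) / u ->
  / (v * x + N) < / (u * x + D).
Proof.
  intros Hu Hv HD Hx Hlt.
  assert (Hux : u * x < N - D).
  { apply (Rmult_lt_compat_l u) in Hlt; [|exact Hu].
    replace (u * ((N - D) / u)) with (N - D) in Hlt by (field; lra). exact Hlt. }
  assert (0 <= u * x) by (apply Rmult_le_pos; lra).
  assert (0 <= v * x) by (apply Rmult_le_pos; lra).
  apply Rinv_lt_contravar; [apply Rmult_lt_0_compat|]; lra.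
Qed.

Theorem theorem2 :
  forall s : TradScheme, valid_trad s ->
  exists K : R, 0 < K /\
  exists C : FTPCode, valid_ftp C /\ ftp_L C = ts_L s /\ ftp_T C = ts_T s /\
    forall a b c : nat, (0 < a)%nat -> (0 < b)%nat -> (0 < c)%nat ->
      INR b * (1 / INR a + 1 / INR c) < K ->
      trad_rate s a b c < ftp_rate C a b c.
Proof.
  intros s [HL [HT HLN]].
  destruct (exists_ftp_code_download_lt _ _ _ HL HT HLN)
    as [C [HC [HCL [HCT [Hpos Hlt]]]]].
  set (u := ftp_Ni C (ftp_pL C) / INR (ftp_L C)).
  assert (Hu : 0 < u).
  { apply Rdiv_lt_0_compat; [apply ftp_Ni_pos; lia|].
    apply (lt_INR 0); lia. }
  exists ((INR (ts_N s) - ftp_download C) / u).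
  split; [apply Rdiv_lt_0_compat; lra|].
  exists C. split; [exact HC | split; [exact HCL | split; [exact HCT|]]].
  intros a b c Ha Hb Hc Hx.
  rewrite ftp_rate_affine, trad_rate_affine by lia.
  apply Rinv_affine_lt; try assumption.
  - apply Rle_mult_inv_pos; [apply pos_INR | apply (lt_INR 0); lia].
  - exact (dimension_ratio_nonneg a b c Ha Hc).
Qed.
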